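(* Under the assumptions below, the eigenvalues $\widetilde{\lambda}_n$ of the differential operator $\mathbf{L}$ associated with the polynomials $q_n$ orthonormal with respect to the discrete Sobolev inner product $(f,g)_S$ satisfy $$\lim_{n\to+\infty}\frac{\widetilde{\lambda}_n}{n^{2(aj+b)+3}}=\frac{2\gamma MC_j^2}{(2(aj+b)+3)(2(aj+b)+1)}\quad \text{if } \gamma\neq0,$$ $$\lim_{n\to+\infty}\frac{\widetilde{\lambda}_n}{n^{2(aj+b+1)}}=\frac{\delta MC_j^2}{2(aj+b+1)(2(aj+b)+1)}\quad \text{if } \gamma=0.$$
   Context: Let $\mu$ be a classical nonsymmetric measure on the real line with $d\mu(x)=w(x)dx$ (Jacobi weight $(1-x)^{\alpha}(1+x)^{\beta}$ on $(-1,1)$ with $c\in\{-1,1\}$, or Laguerre weight $x^{\alpha}e^{-x}$ on $(0,\infty)$ with $c=0$), and consider the discrete Sobolev inner product $(f,g)_S=\int f(x)g(x)\,d\mu+Mf^{(j)}(c)g^{(j)}(c)$ with $j\in\mathbb{N}\cup\{0\}$ and $M>0$. Let $\{p_n\}_{n\ge0}$ be the orthonormal polynomials with respect to $\mu$, eigenfunctions of the operator $\mathbf{B}=\sigma(x)\mathcal{D}^2+\tau(x)\mathcal{D}$ with eigenvalues $\lambda_n$, and let $\{q_n\}_{n\ge0}$ be the orthonormal polynomials with respect to $(f,g)_S$, which are eigenfunctions of a differential operator $\mathbf{L}=\sum_{i\ge1}r_i(x)\mathcal{D}^i$ ($\deg r_i\le i$) with eigenvalues $\widetilde{\lambda}_n=\lambda_n+M\alpha_n$,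 where $\alpha_i=0$ for $i\in\{0,1,\dots,j\}$ and $\alpha_n=\sum_{i=j+1}^n(\lambda_i-\lambda_{i-1})K_{i-1}^{(j,j)}(c,c)$ for $n\ge j+1$, with $K_n^{(r,s)}(x,y)=\sum_{i=0}^np_i^{(r)}(x)p_i^{(s)}(y)$. Assume $p_n^{(k)}(c)\approx C_k(-1)^n n^{ak+b}$ for $0\le k\le n$ (where $a_n\approx b_n$ means $a_n/b_n\to1$), with $C_k$ independent of $n$ and $2(ak+b)+1>0$, and assume $\lambda_n=\gamma n^2+\delta n$ with $\gamma,\delta\in\mathbb{R}$. *)

From HB Require Import structures.
From mathcomp Require Import all_boot all_order all_algebra.
From mathcomp Require Import all_classical all_reals all_analysis.
Set Implicit Arguments. Unset Strict Implicit. Unset Printing Implicit Defensive.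
Import Order.TTheory GRing.Theory Num.Theory.
Import numFieldNormedType.Exports.
Local Open Scope classical_set_scope.
Local Open Scope ring_scope.

(* The classical nonsymmetric setting: weight w on the support D, the
   coefficients sigma, tau of B = sigma D^2 + tau D, and the point c. *)
Definition classical_setting (R : realType) (w : R -> R) (D : set R)
  (sigma tau : {poly R}) (c : R) : Prop :=
  (exists al be : R, -1 < al /\ -1 < be /\
     D = (`]-1, 1[%classic) /\
     w = (fun x => ((1 - x) `^ al) * ((1 + x) `^ be)) /\
     sigma = 1 - 'X^2 /\
     tau = (be - al)%:P - (al + be + 2)%:P * 'X /\
     (c = 1 \/ c = -1))
  \/
  (exists al : R, -1 < al /\
     D = (`]0, +oo[%classic) /\
     w = (fun x => (x `^ al) * expR (- x)) /\
     sigma = 'X /\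
     tau = (al + 1)%:P - 'X /\
     c = 0).

Definition orthonormal_family (R : realType) (w : R -> R) (D : set R)
  (p : nat -> {poly R}) : Prop :=
  (forall n, size (p n) = n.+1) /\
  (forall m n, (\int[@lebesgue_measure R]_(x in D)
                   ((p m).[x] * (p n).[x] * w x)%:E = ((m == n)%:R)%:E)%E).

Definition asymp_eq (R : realType) (u v : nat -> R) : Prop :=
  (fun n => u n / v n) @ \oo --> (1 : R).

Definition Kjj (R : realType) (p : nat -> {poly R}) (j : nat) (c : R) (n : nat) : R :=
  \sum_(i < n.+1) ((p i)^`(j)).[c] ^+ 2.

Definition alphaS (R : realType) (p : nat -> {poly R}) (lam : nat -> R)
  (j : nat) (c : R) (n : nat) : R :=
  if (n <= j)%N then 0
  else \sum_(j.+1 <= i < n.+1) (lam i - lam i.-1) * Kjj p j c i.-1.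

Definition lambda_tilde (R : realType) (p : nat -> {poly R}) (lam : nat -> R)
  (M : R) (j : nat) (c : R) (n : nat) : R :=
  lam n + M * alphaS p lam j c n.

From HB Require Import structures.
From mathcomp Require Import all_boot all_order all_algebra.
From mathcomp Require Import all_classical all_reals all_analysis.
From mathcomp Require Import ring lra.
Set Implicit Arguments. Unset Strict Implicit. Unset Printing Implicit Defensive.
Import Order.TTheory GRing.Theory Num.Theory.
Import numFieldNormedType.Exports.
Local Open Scope classical_set_scope.
Local Open Scope ring_scope.

(* Only the asymptotics p_n^(j)(c) ~ C_j (-1)^n n^s, s = aj + b, and the
   quadratic form of lambda_n enter the argument.  A power-law version of
   the Stolz-Cesaro theorem (if x_n ~ l n^r with r > -1 then
   x_0 + ... + x_n ~ l n^(r+1) / (r+1)), applied to the squares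
   p_i^(j)(c)^2 ~ C_j^2 i^(2s), gives K_(n-1)^(j,j)(c,c) ~ C_j^2 n^(2s+1) / (2s+1).
   The increments lambda_i - lambda_(i-1) are ~ 2 gamma i, or exactly delta
   when gamma = 0, so a second application of the same lemma to the terms of
   alpha_n gives its growth, and lambda_n itself is of lower order. *)

Section stolz_cesaro.
Variable R : realFieldType.

Lemma stolz_telescope_bound (a b : nat -> R) (l e : R) (N : nat) :
  (forall n, b n < b n.+1) ->
  (forall n, (N <= n)%N -> `|l - (a n.+1 - a n) / (b n.+1 - b n)| <= e) ->
  forall n, (N <= n)%N -> `|(a n - a N) - l * (b n - b N)| <= e * (b n - b N).
Proof.
move=> b_incr quot_close n /subnK <-; elim: (n - N)%N => [|k IH].
  by rewrite add0n !subrr mulr0 subrr normr0 mulr0.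
rewrite addSn; set m := (k + N)%N in IH *.
have d_gt0 : 0 < b m.+1 - b m by rewrite subr_gt0.
set d := b m.+1 - b m in d_gt0 *.
have -> : a m.+1 - a N - l * (b m.+1 - b N)
    = (a m - a N - l * (b m - b N)) + d * ((a m.+1 - a m) / d - l).
  have d_cancel : d * ((a m.+1 - a m) / d) = a m.+1 - a m.
    by rewrite mulrC divfK ?gt_eqF.
  by rewrite [d * (_ - l)]mulrBr d_cancel /d; ring.
rewrite (_ : e * _ = e * (b m - b N) + d * e); last by rewrite /d; ring.
apply: le_trans (ler_normD _ _) (lerD IH _).
by rewrite normrM gtr0_norm // ler_pM2l // distrC quot_close // leq_addl.
Qed.

Lemma stolz_cesaro (a b : nat -> R) (l : R) :
  (forall n, 0 <= b n) -> (forall n, b n < b n.+1) ->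
  (fun n => (b n)^-1) @ \oo --> 0 ->
  (fun n => (a n.+1 - a n) / (b n.+1 - b n)) @ \oo --> l ->
  (fun n => a n / b n) @ \oo --> l.
Proof.
move=> b_ge0 b_incr b_inv0 /cvgrPdist_le quot_l; apply/cvgrPdist_le => e e_gt0.
have e2_gt0 : 0 < e / 2 by rewrite divr_gt0.
have [N _ quot_close] := quot_l _ e2_gt0.
pose K : R := `|a N - l * b N|.
have K_ge0 : 0 <= K := normr_ge0 _.
have /cvgrPdist_le /(_ _ e2_gt0) K_small : (fun n => K / b n) @ \oo --> 0.
  by rewrite -(mulr0 K); exact: cvgMl_tmp.
near=> n.
have b_gt0 : 0 < b n.
  apply: le_lt_trans (b_ge0 0) (homo_ltn lt_trans b_incr _).
  by near: n; exact: nbhs_infty_gt.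
have head_bound : K <= e / 2 * b n.
  have : `|0 - K / b n| <= e / 2 by near: n; exact: K_small.
  rewrite sub0r normrN ger0_norm ?divr_ge0 ?K_ge0 ?(ltW b_gt0) //.
  by move=> /(ler_wpM2r (ltW b_gt0)); rewrite divfK ?gt_eqF.
have tail_bound : `|a n - a N - l * (b n - b N)| <= e / 2 * (b n - b N).
  by apply: stolz_telescope_bound => //; near: n; exact: nbhs_infty_ge.
have -> : l - a n / b n = - ((a n - a N - l * (b n - b N)) + (a N - l * b N)) / b n.
  by field; rewrite gt_eqF.
have sum_bound : `|a n - a N - l * (b n - b N) + (a N - l * b N)| <= e * b n.
  apply: le_trans (ler_normD _ _) _; rewrite -/K.
  have := mulr_ge0 (ltW e2_gt0) (b_ge0 N); lra.
rewrite normrM normrN normfV (gtr0_norm b_gt0).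
have binv_ge0 : 0 <= (b n)^-1 by rewrite invr_ge0 ltW.
have := ler_wpM2r binv_ge0 sum_bound.
by rewrite mulfK ?gt_eqF.
Unshelve. all: end_near. Qed.
End stolz_cesaro.

Section power_growth.
Variable R : realType.

Lemma cvg_harmonic_within (P : set R) :
  (forall n, P (harmonic n)) -> harmonic @ \oo --> within P (nbhs (0 : R)).
Proof.
move=> P_harmonic A /= A_near0.
apply: (@filterS _ _ _ (harmonic @^-1` [set x | P x -> A x])) (cvg_harmonic A_near0).
by move=> n /= /(_ (P_harmonic n)).
Qed.

Lemma cvg_invr_natr : (fun n => (n%:R : R)^-1) @ \oo --> 0.
Proof. by rewrite -cvg_shiftS; exact: cvg_harmonic. Qed.

Lemma cvg_inv_powR (q : R) : 0 < q -> (fun n => (n%:R `^ q)^-1) @ \oo --> 0.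
Proof.
move=> q_gt0; rewrite -cvg_shiftS.
have := cvg_comp _ _ (cvg_harmonic_within (@harmonic_gt0 R)) (powR_cvg0 q_gt0).
apply: cvg_trans; apply: near_eq_cvg; near=> n => /=.
by rewrite -powRN -(mulN1r q) powRrM powR_inv1.
Unshelve. end_near. Qed.

Lemma cvg_natr_exp_div_powR (k : nat) (e : R) : k%:R < e ->
  (fun n => n%:R ^+ k / n%:R `^ e) @ \oo --> 0.
Proof.
rewrite -subr_gt0 => /cvg_inv_powR; apply: cvg_trans; apply: near_eq_cvg.
near=> n => /=.
have n_neq0 : n%:R != 0 :> R by rewrite pnatr_eq0 -lt0n; near: n; exact: nbhs_infty_gt.
by rewrite powRB ?n_neq0 ?implybT // invf_div powR_mulrn.
Unshelve. end_near. Qed.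

Lemma cvg_powR_succ_sub (q : R) :
  (fun n => (n.+1%:R `^ q - n%:R `^ q) / n%:R `^ (q - 1)) @ \oo --> q.
Proof.
have deriv_at1 : (fun n => n.+1%:R * ((1 + n.+1%:R^-1) `^ q - 1)) @ \oo --> q.
  have powR_deriv := @is_derive1_powR R q 1 ltr01.
  have powR_derivable := @ex_derive _ _ _ _ _ _ _ powR_deriv.
  have powR_derive := @derive_val _ _ _ _ _ _ _ powR_deriv.
  rewrite powR1 mulr1 in powR_derive; rewrite /derivable in powR_derivable.
  have := cvg_comp _ _ (cvg_harmonic_within (fun n => lt0r_neq0 (harmonic_gt0 n)))
    powR_derivable.
  rewrite -/(derive _ _ _) powR_derive.
  apply: cvg_trans; apply: near_eq_cvg; near=> n => /=.
  by rewrite invrK /= [_ *: 1]mulr1 addrC powR1 /GRing.scale /= addrC [_ + 1]addrC.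
rewrite -cvg_shiftS; apply: cvg_trans deriv_at1; apply: near_eq_cvg; near=> n => /=.
set m : R := n.+1%:R.
have m_gt0 : 0 < m by rewrite ltr0Sn.
have -> : n.+2%:R = m * (1 + m^-1) by rewrite mulrDr mulr1 divff ?gt_eqF // -natr1.
rewrite powRM ?(ltW m_gt0) ?addr_ge0 ?invr_ge0 ?(ltW m_gt0) //.
have -> : m `^ q = m `^ (q - 1) * m.
  have := @powRD R m (q - 1) 1.
  by rewrite subrK powRr1 ?(ltW m_gt0) // (gt_eqF m_gt0) implybT => /(_ isT).
have : m `^ (q - 1) != 0 by rewrite gt_eqF // powR_gt0.
by move=> ?; field.
Unshelve. all: end_near. Qed.

Lemma cvg_mul_div_powR (f g : nat -> R) (r t l1 l2 : R) :
  (fun n => f n / n%:R `^ r) @ \oo --> l1 ->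
  (fun n => g n / n%:R `^ t) @ \oo --> l2 ->
  (fun n => f n * g n / n%:R `^ (r + t)) @ \oo --> l1 * l2.
Proof.
move=> f_lim g_lim; apply: cvg_trans (cvgM f_lim g_lim); apply: near_eq_cvg.
near=> n => /=.
have n_neq0 : n%:R != 0 :> R by rewrite pnatr_eq0 -lt0n; near: n; exact: nbhs_infty_gt.
by rewrite powRD ?n_neq0 ?implybT // mulf_div.
Unshelve. end_near. Qed.

Lemma cvg_sum_div_powR (x : nat -> R) (r l : R) : -1 < r ->
  (fun n => x n / n%:R `^ r) @ \oo --> l ->
  (fun n => (\sum_(i < n) x i) / n%:R `^ (r + 1)) @ \oo --> l / (r + 1).
Proof.
move=> r_gtN1 x_lim; have r1_gt0 : 0 < r + 1 by rewrite -ltrBlDr sub0r.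
apply: stolz_cesaro.
- by move=> n; exact: powR_ge0.
- by move=> n; apply: gt0_ltr_powR => //; rewrite ?nnegrE ?ler0n // ltr_nat.
- exact: cvg_inv_powR.
have succ_sub := @cvg_powR_succ_sub (r + 1); rewrite addrK in succ_sub.
apply: cvg_trans (cvgM x_lim (cvgV (lt0r_neq0 r1_gt0) succ_sub)).
apply: near_eq_cvg; near=> n => /=.
have n_gt0 : (0 < n)%N by near: n; exact: nbhs_infty_gt.
have : n%:R `^ r != 0 by rewrite gt_eqF // powR_gt0 // ltr0n.
have : n.+1%:R `^ (r + 1) - n%:R `^ (r + 1) != 0.
  by rewrite subr_eq0 gt_eqF // gt0_ltr_powR // ?nnegrE ?ler0n // ltr_nat.
by rewrite big_ord_recr /= addrC addrK invf_div => ? ?; rewrite mulrA mulfVK.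
Unshelve. end_near. Qed.

Lemma cvg_sumS_div_powR (x : nat -> R) (r l : R) : -1 < r ->
  (fun n => x n / n%:R `^ r) @ \oo --> l ->
  (fun n => (\sum_(i < n.+1) x i) / n%:R `^ (r + 1)) @ \oo --> l / (r + 1).
Proof.
move=> r_gtN1 x_lim.
have -> : l / (r + 1) = l / (r + 1) + l * 0 by rewrite mulr0 addr0.
apply: cvg_trans (cvgD (cvg_sum_div_powR r_gtN1 x_lim) (cvgM x_lim cvg_invr_natr)).
apply: near_eq_cvg; near=> n => /=.
have n_neq0 : n%:R != 0 :> R by rewrite pnatr_eq0 -lt0n; near: n; exact: nbhs_infty_gt.
have : n%:R `^ r != 0 by rewrite gt_eqF // powR_gt0 // lt0r n_neq0 ler0n.
rewrite !fctE big_ord_recr /= powRD ?powRr1 ?ler0n ?n_neq0 ?implybT // => ?.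
by field; rewrite n_neq0.
Unshelve. all: end_near. Qed.

End power_growth.

Section asymptotic_equivalence.
Variable R : realType.

Lemma asymp_eq_neq0 (u v : nat -> R) :
  asymp_eq u v -> \forall n \near \oo, v n != 0.
Proof.
move=> /cvgrPdist_lt /(_ 1 ltr01); apply: filterS => n.
by apply: contraTneq => ->; rewrite invr0 mulr0 subr0 normr1 ltxx.
Qed.

Lemma cvg_sqr_div_powR_of_asymp (u : nat -> R) (C s : R) :
  asymp_eq u (fun n => C * (-1) ^+ n * n%:R `^ s) ->
  (fun n => u n ^+ 2 / n%:R `^ (2 * s)) @ \oo --> C ^+ 2.
Proof.
move=> asymp; have v_neq0 := asymp_eq_neq0 asymp.
have -> : C ^+ 2 = 1 * 1 * C ^+ 2 by rewrite !mul1r.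
apply: cvg_trans (cvgM (cvgM asymp asymp) (cvg_cst (C ^+ 2))).
apply: near_eq_cvg; near=> n => /=.
have vn_neq0 : C * (-1) ^+ n * n%:R `^ s != 0 by near: n.
have C_neq0 : C != 0 by apply: contraNneq vn_neq0 => ->; rewrite !mul0r.
have ns_neq0 : n%:R `^ s != 0 by apply: contraNneq vn_neq0 => ->; rewrite mulr0.
have ns2 : n%:R `^ (2 * s) = (n%:R `^ s) ^+ 2.
  by rewrite mulrC powRrM powR_mulrn // powR_ge0.
have sign2 : ((-1) ^+ n) ^+ 2 = 1 :> R.
  by rewrite -exprM mulnC exprM sqrrN expr1n expr1n.
rewrite ns2 mulf_div -!expr2 !exprMn sign2 mulr1.
by field; rewrite C_neq0 ns_neq0.
Unshelve. end_near. Qed.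

End asymptotic_equivalence.

Definition alphaS_increment (R : realType) (p : nat -> {poly R}) (lam : nat -> R)
  (j : nat) (c : R) (i : nat) : R :=
  (lam i - lam i.-1) * Kjj p j c i.-1.

Section sobolev_eigenvalues.
Variables (R : realType) (p : nat -> {poly R}) (lam : nat -> R) (j : nat) (c : R).

Lemma alphaS_partial_sumsE n : (j < n)%N ->
  alphaS p lam j c n =
    \sum_(i < n.+1) alphaS_increment p lam j c i
    - \sum_(i < j.+1) alphaS_increment p lam j c i.
Proof.
move=> j_lt_n; rewrite /alphaS leqNgt j_lt_n /=.
rewrite -!(big_mkord xpredT) [in RHS](@big_cat_nat _ _ _ j.+1 0 n.+1) //=.
  by rewrite addrAC subrr add0r.
exact: leqW.
Qed.

Lemma cvg_lambda_tilde_div_powR (M r l : R) : -1 < r ->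
  (fun n => lam n / n%:R `^ (r + 1)) @ \oo --> 0 ->
  (fun i => alphaS_increment p lam j c i / i%:R `^ r) @ \oo --> l ->
  (fun n => lambda_tilde p lam M j c n / n%:R `^ (r + 1)) @ \oo
    --> M * (l / (r + 1)).
Proof.
move=> r_gtN1 lam_lim increment_lim; have r1_gt0 : 0 < r + 1 by rewrite -ltrBlDr sub0r.
set S_j := \sum_(i < j.+1) alphaS_increment p lam j c i.
have -> : M * (l / (r + 1)) = 0 + M * (l / (r + 1) - S_j * 0).
  by rewrite mulr0 subr0 add0r.
apply: cvg_trans (cvgD lam_lim (cvgMl_tmp (cvgB (cvg_sumS_div_powR r_gtN1 increment_lim)
  (cvgMl_tmp (cvg_inv_powR r1_gt0))))).
apply: near_eq_cvg; near=> n => /=.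
have j_lt_n : (j < n)%N by near: n; exact: nbhs_infty_gt.
have : n%:R `^ (r + 1) != 0.
  by rewrite gt_eqF // powR_gt0 // ltr0n (leq_ltn_trans _ j_lt_n).
by rewrite /lambda_tilde alphaS_partial_sumsE // !fctE /S_j => ?; field.
Unshelve. end_near. Qed.

Lemma cvg_Kjj_div_powR (C s : R) :
  asymp_eq (fun n => ((p n)^`(j)).[c]) (fun n => C * (-1) ^+ n * n%:R `^ s) ->
  0 < 2 * s + 1 ->
  (fun i => Kjj p j c i.-1 / i%:R `^ (2 * s + 1)) @ \oo --> C ^+ 2 / (2 * s + 1).
Proof.
move=> asymp s_pos; have s2_gtN1 : -1 < 2 * s by lra.
apply: cvg_trans (cvg_sum_div_powR s2_gtN1 (cvg_sqr_div_powR_of_asymp asymp)).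
apply: near_eq_cvg; near=> i => /=.
have i_gt0 : (0 < i)%N by near: i; exact: nbhs_infty_gt.
by rewrite /Kjj prednK.
Unshelve. end_near. Qed.

End sobolev_eigenvalues.

Section quadratic_eigenvalues.
Variables (R : realType) (gamma delta : R) (lam : nat -> R).
Hypothesis lamE : forall n, lam n = gamma * n%:R ^+ 2 + delta * n%:R.

Lemma quadratic_incrementE i : (0 < i)%N ->
  lam i - lam i.-1 = 2 * gamma * i%:R + (delta - gamma).
Proof. by case: i => // i _; rewrite /= !lamE -natr1; ring. Qed.

Lemma cvg_quadratic_increment :
  (fun i => (lam i - lam i.-1) / i%:R `^ 1) @ \oo --> 2 * gamma.
Proof.
have -> : 2 * gamma = 2 * gamma + (delta - gamma) * 0 by rewrite mulr0 addr0.
apply: cvg_trans (cvgD (cvg_cst _) (cvgMl_tmp (@cvg_invr_natr R))).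
apply: near_eq_cvg; near=> i => /=.
have i_gt0 : (0 < i)%N by near: i; exact: nbhs_infty_gt.
have : i%:R != 0 :> R by rewrite pnatr_eq0 -lt0n.
by rewrite quadratic_incrementE // powRr1 // fctE => ?; field.
Unshelve. end_near. Qed.

Lemma cvg_quadratic_increment0 : gamma = 0 ->
  (fun i => (lam i - lam i.-1) / i%:R `^ 0) @ \oo --> delta.
Proof.
move=> gamma0; apply: cvg_near_cst; near=> i.
have i_gt0 : (0 < i)%N by near: i; exact: nbhs_infty_gt.
by rewrite quadratic_incrementE // powRr0 divr1 gamma0; ring.
Unshelve. end_near. Qed.

Lemma cvg_quadratic_div_powR (e : R) : 1 < e -> (gamma != 0 -> 2 < e) ->
  (fun n => lam n / n%:R `^ e) @ \oo --> 0.
Proof.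
move=> e_gt1 e_gt2; have linear_lim := @cvg_natr_exp_div_powR R 1 e e_gt1.
have [gamma0 | /e_gt2 e_gt2'] := eqVneq gamma 0.
  rewrite -(mulr0 delta); apply: cvg_trans (cvgMl_tmp linear_lim).
  by apply: near_eq_cvg; near=> n => /=; rewrite lamE gamma0 mul0r add0r expr1 mulrA.
have -> : (0 : R) = gamma * 0 + delta * 0 by rewrite !mulr0 addr0.
have square_lim := @cvg_natr_exp_div_powR R 2 e e_gt2'.
apply: cvg_trans (cvgD (cvgMl_tmp square_lim) (cvgMl_tmp linear_lim)).
by apply: near_eq_cvg; near=> n => /=; rewrite lamE fctE /= expr1; ring.
Unshelve. all: end_near. Qed.

End quadratic_eigenvalues.

Theorem theorem1 (R : realType) (w : R -> R) (D : set R)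
  (sigma tau : {poly R}) (c : R) (p : nat -> {poly R}) (lam : nat -> R)
  (j : nat) (M : R) (a b gamma delta : R) (C : nat -> R) :
  classical_setting w D sigma tau c ->
  orthonormal_family w D p ->
  (forall n, sigma * (p n)^`(2) + tau * (p n)^`() = lam n *: p n) ->
  0 < M ->
  (forall k : nat,
     asymp_eq (fun n => ((p n)^`(k)).[c])
              (fun n => C k * (-1) ^+ n * (n%:R `^ (a * k%:R + b)))) ->
  (forall k : nat, 0 < 2 * (a * k%:R + b) + 1) ->
  (forall n : nat, lam n = gamma * n%:R ^+ 2 + delta * n%:R) ->
  (gamma != 0 ->
     (fun n => lambda_tilde p lam M j c n / n%:R `^ (2 * (a * j%:R + b) + 3))
       @ \oo --> 2 * gamma * M * C j ^+ 2
                 / ((2 * (a * j%:R + b) + 3) * (2 * (a * j%:R + b) + 1)))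
  /\
  (gamma = 0 ->
     (fun n => lambda_tilde p lam M j c n / n%:R `^ (2 * (a * j%:R + b + 1)))
       @ \oo --> delta * M * C j ^+ 2
                 / (2 * (a * j%:R + b + 1) * (2 * (a * j%:R + b) + 1))).
Proof.
move=> _ _ _ _ asymp_p s_pos lamE.
have K_lim := cvg_Kjj_div_powR (asymp_p j) (s_pos j).
have s1_gt0 := s_pos j.
set s := a * j%:R + b in K_lim s1_gt0 *.
have s1_neq0 : 2 * s + 1 != 0 by exact: lt0r_neq0.
split=> [gamma_neq0 | gamma0].
- have r_gtN1 : -1 < 1 + (2 * s + 1) by lra.
  have lam_lim : (fun n => lam n / n%:R `^ (1 + (2 * s + 1) + 1)) @ \oo --> 0.
    by apply: (cvg_quadratic_div_powR lamE) => [|_]; lra.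
  have := cvg_lambda_tilde_div_powR (M := M) r_gtN1 lam_lim
    (cvg_mul_div_powR (cvg_quadratic_increment lamE) K_lim).
  have -> : 1 + (2 * s + 1) + 1 = 2 * s + 3 by ring.
  have s3_neq0 : 2 * s + 3 != 0 by apply: lt0r_neq0; lra.
  rewrite (_ : 2 * gamma * M * _ / _
             = M * (2 * gamma * (C j ^+ 2 / (2 * s + 1)) / (2 * s + 3))) //.
  by field; rewrite s1_neq0 s3_neq0.
- have r_gtN1 : -1 < 0 + (2 * s + 1) by lra.
  have lam_lim : (fun n => lam n / n%:R `^ (0 + (2 * s + 1) + 1)) @ \oo --> 0.
    by apply: (cvg_quadratic_div_powR lamE); rewrite ?gamma0 ?eqxx //; lra.
  have := cvg_lambda_tilde_div_powR (M := M) r_gtN1 lam_lim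
    (cvg_mul_div_powR (cvg_quadratic_increment0 lamE gamma0) K_lim).
  have -> : 0 + (2 * s + 1) + 1 = 2 * (s + 1) by ring.
  have s_succ_neq0 : s + 1 != 0 by apply: lt0r_neq0; lra.
  rewrite (_ : delta * M * _ / _
             = M * (delta * (C j ^+ 2 / (2 * s + 1)) / (2 * (s + 1)))) //.
  by field; rewrite s1_neq0 s_succ_neq0.
Qed.
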